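(* Fix $m \ge 1$ and consider the finite partial monitoring game for SumLoss with top-1 feedback and binary relevance, with loss matrix $L$ and feedback matrix $H$ as defined in the context. Then the global observability condition holds: for every pair of learner actions $\sigma_i,\sigma_j$, $$\ell_i-\ell_j \in \bigoplus_{k\in[m!]} \mathrm{Col}(S_k^{\top}).$$
   Context: Objects are $\{1,\dots,m\}$; $[n]=\{1,\dots,n\}$. A learner action is a permutation $\sigma$ of $[m]$, where $\sigma(i)$ is the rank (position) of object $i$ and $\sigma^{-1}(j)$ is the object at position $j$; fix an enumeration $\sigma_1,\dots,\sigma_{m!}$ of all permutations. An adversary action is a relevance vector $r\in\{0,1\}^m$; fix an enumeration $r_1,\dots,r_{2^m}$. SumLoss is $SumLoss(\sigma,r)=\sum_{i=1}^m \sigma(i)r(i)$. The loss matrix $L$ is the $m!\times 2^m$ matrix with $L_{i,j}=SumLoss(\sigma_i,r_j)$, and $\ell_i\in\mathbb{R}^{2^m}$ denotes its $i$-th row. The feedback matrix $H$ is the $m!\times 2^m$ matrix with $H_{i,j}=r_j(\sigma_i^{-1}(1))$ (the relevance of the top-ranked object). The signal matrix of action $\sigma_i$ is $S_i\in\{0,1\}^{2\times 2^m}$ with $(S_i)_{1,\ell}=\mathbb{1}(H_{i,\ell}=0)$ and $(S_i)_{2,\ell}=\mathbb{1}(H_{i,\ell}=1)$. $\mathrm{Col}(\cdot)$ denotes column space and $\bigoplus$ the sum of subspaces of $\mathbb{R}^{2^m}$. *)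

From HB Require Import structures.
From mathcomp Require Import all_boot all_order all_algebra all_fingroup.
Set Implicit Arguments. Unset Strict Implicit. Unset Printing Implicit Defensive.
Import GRing.Theory Num.Theory.
Local Open Scope ring_scope.

(* Objects {1..m} are represented by 'I_m (object i+1 <-> ordinal i).
   A learner action is sigma : {perm 'I_m}; the rank of object i is
   (val (sigma i)).+1 in {1..m}. *)
Definition learner_action (m : nat) := {perm 'I_m}.
Definition relevance (m : nat) := {ffun 'I_m -> bool}.

Definition SumLoss (m : nat) (s : learner_action m) (r : relevance m) : nat :=
  (\sum_(i < m) (val (s i)).+1 * r i)%N.

Definition top_object (m : nat) (s : learner_action m) : option 'I_m :=
  [pick i | val (s i) == 0%N].

(* Top-1 feedback: relevance of the top-ranked object (m >= 1 ensures it exists). *)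
Definition feedback (m : nat) (s : learner_action m) (r : relevance m) : bool :=
  if top_object s is Some i then r i else false.

Definition nA (m : nat) := #|{: learner_action m}|.
Definition nR (m : nat) := #|{: relevance m}|.
Definition sigma_ (m : nat) (i : 'I_(nA m)) : learner_action m := enum_val i.
Definition r_ (m : nat) (j : 'I_(nR m)) : relevance m := enum_val j.

Definition lossL (R : nzRingType) (m : nat) : 'M[R]_(nA m, nR m) :=
  \matrix_(i, j) (SumLoss (sigma_ i) (r_ j))%:R.

Definition feedH (m : nat) : 'M[nat]_(nA m, nR m) :=
  \matrix_(i, j) (nat_of_bool (feedback (sigma_ i) (r_ j))).

Definition signalS (R : nzRingType) (m : nat) (k : 'I_(nA m)) : 'M[R]_(2, nR m) :=
  \matrix_(a, l) (if (a == 0 :> 'I_2)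
                  then (feedH m k l == 0%N)%:R else (feedH m k l == 1%N)%:R).

Arguments lossL R m : clear implicits.
Arguments signalS R m k : clear implicits.

From mathcomp Require Import all_boot all_order all_algebra all_fingroup.
Local Open Scope ring_scope.
Import GRing.Theory.

(* Every object o is the top object of some ranking, and the second row of
   that ranking's signal matrix is the vector (r_l(o))_l of relevances of o.
   Since SumLoss is linear in r, every row l_i of L is a combination of these
   relevance vectors, so already each single row lies in the sum of the
   signal row spaces; a fortiori so does l_i - l_j. *)

Section TopObject.
Variable m : nat.

Lemma top_objectE (s : learner_action m) (o : 'I_m) :
  val (s o) = 0%N -> top_object s = Some o.
Proof.
move=> so0; rewrite /top_object; case: pickP => [x /eqP sx0 | /(_ o)].
  by congr Some; apply: (@perm_inj _ s); apply: val_inj; rewrite sx0 so0.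
by rewrite so0 eqxx.
Qed.

Lemma exists_top_object (hm : (1 <= m)%N) (o : 'I_m) :
  exists s : learner_action m, top_object s = Some o.
Proof.
exists (tperm o (Ordinal hm)); apply: top_objectE.
by rewrite tpermL.
Qed.

End TopObject.

Section SignalSpan.
Variables (R : fieldType) (m : nat).

Definition relevance_row (o : 'I_m) : 'rV[R]_(nR m) :=
  \row_l (r_ l o : nat)%:R.

Lemma relevance_row_sub_signals (hm : (1 <= m)%N) (o : 'I_m) :
  (relevance_row o <= \sum_(k < nA m) <<signalS R m k>>)%MS.
Proof.
have [s top_s] := @exists_top_object m hm o.
have sigma_s : sigma_ (enum_rank s) = s by rewrite /sigma_ enum_rankK.
apply: (sumsmx_sup (enum_rank s)) => //; rewrite genmxE.
apply: (@eq_row_sub _ _ _ _ _ (1 : 'I_2)); apply/rowP => l.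
by rewrite !mxE /= /feedback sigma_s top_s; case: (r_ l o).
Qed.

Lemma row_lossL (i : 'I_(nA m)) :
  row i (lossL R m) = \sum_(o < m) (val (sigma_ i o)).+1%:R *: relevance_row o.
Proof.
apply/rowP => l; rewrite !mxE summxE /SumLoss natr_sum.
apply: eq_bigr => o _; rewrite !mxE natrM.
by case: (r_ l o); rewrite ?mulr1 ?mulr0.
Qed.

Lemma row_lossL_sub_signals (hm : (1 <= m)%N) (i : 'I_(nA m)) :
  (row i (lossL R m) <= \sum_(k < nA m) <<signalS R m k>>)%MS.
Proof.
rewrite row_lossL; apply: summx_sub => o _; apply: scalemx_sub.
exact: relevance_row_sub_signals.
Qed.

End SignalSpan.

Theorem theorem1 (R : realFieldType) (m : nat) (hm : (1 <= m)%N)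
    (i j : 'I_(nA m)) :
  (row i (lossL R m) - row j (lossL R m)
     <= \sum_(k < nA m) <<signalS R m k>>)%MS.
Proof.
apply: addmx_sub; first exact: row_lossL_sub_signals.
by rewrite eqmx_opp; exact: row_lossL_sub_signals.
Qed.
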